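(* Let $k_0<0$, $0<L\leq\pi$, let $D\subset(0,L)$ be a set of full Lebesgue measure, and let $w:D\to\mathbb{R}$ satisfy: (i) $w$ is strictly decreasing on $D$: for $t_1,t_2\in D$ with $t_1<t_2$, $w(t_1)>w(t_2)$; (ii) for every $t_0\in D$, $\limsup_{D\ni t\to t_0^+}\frac{w(t)-w(t_0)}{t-t_0}\leq-1-(w(t_0))^2$; (iii) $w(t)\leq\frac{\sqrt{-k_0}\cosh(\sqrt{-k_0}t)}{\sinh(\sqrt{-k_0}t)}$ for $t\in D$ close to $0$. Then $w(t)\leq\cot t$ for every $t\in D$. *)

From HB Require Import structures.
From mathcomp Require Import all_boot all_order all_algebra.
From mathcomp Require Import all_classical all_reals all_analysis.
Set Implicit Arguments. Unset Strict Implicit. Unset Printing Implicit Defensive.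
Import Order.TTheory GRing.Theory Num.Theory.
Import numFieldNormedType.Exports.
Local Open Scope classical_set_scope.
Local Open Scope ring_scope.

Definition coshR {R : realType} (x : R) : R := (expR x + expR (- x)) / 2.
Definition sinhR {R : realType} (x : R) : R := (expR x - expR (- x)) / 2.
Definition cotR {R : realType} (x : R) : R := cos x / sin x.

Definition right_upper_dini {R : realType} (D : set R) (w : R -> R) (t0 : R)
  : \bar R :=
  limf_esup (fun t : R => ((w t - w t0) / (t - t0))%:E) (within D t0^'+).

(** The function [t |-> atan (w t) + t] is nonincreasing on [D]: hypothesis
  (ii) makes [atan \o w] decrease at rate almost [1] to the right of every
  point of [D], and [w] is monotone across the null gaps of [D], which can be
  covered by an open set of arbitrarily small measure; a supremum argument
  spends that measure as slack.  Letting [s -> 0+] in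
  [atan (w t) + t <= atan (w s) + s < pi/2 + s] gives [atan (w t) <= pi/2 - t],
  i.e. [w t <= tan (pi/2 - t) = cot t]. *)

From HB Require Import structures.
From mathcomp Require Import all_boot all_order all_algebra.
From mathcomp Require Import all_classical all_reals all_analysis.
From mathcomp Require Import ring lra.
Set Implicit Arguments. Unset Strict Implicit. Unset Printing Implicit Defensive.
Import Order.TTheory GRing.Theory Num.Theory.
Import numFieldNormedType.Exports.
Local Open Scope classical_set_scope.
Local Open Scope ring_scope.

Lemma right_upper_dini_lt {R : realType} (D : set R) (w : R -> R) t0 (M : R) :
  (right_upper_dini D w t0 < M%:E)%E ->
  exists2 r : R, 0 < r & forall t, D t -> t0 < t -> t < t0 + r ->
     (w t - w t0) / (t - t0) < M.
Proof.
rewrite /right_upper_dini limf_esupE => /ereal_inf_lt[_ [V VF <-] VM].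
move: VF; rewrite /within /= nearE => /nbhs_ballP[e e0 He].
exists e => // t Dt t0t tt0.
have Vt : V t.
  apply: (He t) => //.
  by rewrite /ball /= ltr0_norm ?subr_lt0 // opprB ltrBlDl.
rewrite -lte_fin; apply: le_lt_trans VM.
by apply: ereal_sup_ubound; exists t.
Qed.

Lemma atan_difference_quotient {R : realType} (y c : R) : 0 < c ->
  exists2 r : R, 0 < r & forall h, h != 0 -> `|h| < r ->
    `|(1 + y ^+ 2)^-1 - h^-1 * (atan (y + h) - atan y)| < c.
Proof.
move=> c0.
have /cvg_ex[l Hl] := @ex_derive _ _ _ _ _ _ _ (is_derive1_atan y).
have -> : (1 + y ^+ 2)^-1 = l.
  by rewrite -(@derive_val _ _ _ _ _ _ _ (is_derive1_atan y)) /derive (cvg_lim _ Hl).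
move: Hl => /cvgrPdist_lt /(_ c c0).
rewrite /dnbhs /within /= nearE => /nbhs_ballP[r r0 Hr].
exists r => // h h0 hr.
have := Hr h; rewrite /ball /= sub0r normrN => /(_ hr h0).
by rewrite /= -[h%:A]/(h * 1) mulr1 (addrC h y).
Qed.

(* A drop of [x] below [y] at rate [(1 - e/2) (1 + y^2)] costs [atan] at rate
   at least [1 - e], since [atan' y = 1 / (1 + y^2)]. *)
Lemma atan_sub_le {R : realType} (y e : R) : 0 < e -> e < 1 ->
  exists2 r : R, 0 < r & forall s x, 0 < s -> s < r ->
    x <= y - (1 - e / 2) * (1 + y ^+ 2) * s -> atan x - atan y <= - (1 - e) * s.
Proof.
move=> e0 e1.
set d := (1 + y ^+ 2)^-1.
have y2 : 0 < 1 + y ^+ 2 by rewrite ltr_pwDl // sqr_ge0.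
have d0 : 0 < d by rewrite invr_gt0.
have Pd : (1 + y ^+ 2) * d = 1 by rewrite mulfV // gt_eqF.
have c0 : 0 < d * e / 2 by rewrite divr_gt0 // mulr_gt0.
have [r r0 Hr] := atan_difference_quotient y c0.
set P := (1 - e / 2) * (1 + y ^+ 2).
have P0 : 0 < P by rewrite mulr_gt0 //; lra.
exists (r / P); first by rewrite divr_gt0.
move=> s x s0 sr xle.
set h := - (P * s).
have h0 : h < 0 by rewrite oppr_lt0 mulr_gt0.
have hr : `|h| < r by rewrite ltr0_norm // opprK -ltr_pdivlMl // mulrC.
have := Hr h (ltr0_neq0 h0) hr; rewrite -/d ltr_distlC => /andP[q1 _].
set q := h^-1 * _ in q1.
have E : atan (y + h) - atan y = h * q by rewrite /q mulVKf // ltr0_neq0.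
have ax : atan x <= atan (y + h) by apply: le_atan; rewrite /h.
have E2 : h * (d - d * e / 2) = - ((1 - e / 2) ^+ 2) * s.
  rewrite /h /P; transitivity (- ((1 - e / 2) ^+ 2 * ((1 + y ^+ 2) * d) * s)).
    by ring.
  by rewrite Pd mulr1 mulNr.
have hq : h * q <= h * (d - d * e / 2) by nra.
nra.
Qed.

Lemma atan_right_slope {R : realType} (D : set R) (w : R -> R) t0 (e : R) :
  (right_upper_dini D w t0 <= (- 1 - w t0 ^+ 2)%:E)%E -> 0 < e -> e < 1 ->
  exists2 r : R, 0 < r & forall t, D t -> t0 < t -> t < t0 + r ->
    atan (w t) - atan (w t0) <= - (1 - e) * (t - t0).
Proof.
move=> hdini e0 e1.
set M := - (1 - e / 2) * (1 + w t0 ^+ 2).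
have y2 : 0 < 1 + w t0 ^+ 2 by rewrite ltr_pwDl // sqr_ge0.
have hM : (right_upper_dini D w t0 < M%:E)%E.
  by apply: le_lt_trans hdini _; rewrite lte_fin /M; nra.
have [r1 r10 H1] := right_upper_dini_lt hM.
have [r2 r20 H2] := atan_sub_le (w t0) e0 e1.
exists (Order.min r1 r2); first by rewrite lt_min r10 r20.
move=> t Dt t0t; rewrite -ltrBlDl lt_min !ltrBlDl => /andP[tr1 tr2].
have st : 0 < t - t0 by rewrite subr_gt0.
have := H1 t Dt t0t tr1; rewrite ltr_pdivrMr // /M => h1.
by apply: H2 => //; lra.
Qed.

Lemma negligible_compl_dense {R : realType} (L : R) (D : set R) :
  (@lebesgue_measure R).-negligible (`]0, L[ `\` D) ->
  forall x y, 0 <= x -> x < y -> y <= L -> exists z, [/\ D z, x < z & z < y].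
Proof.
move=> [A [mA A0 NA]] x y x0 xy yL.
apply: contrapT => Hn.
have sub : `]x, y[ `<=` A.
  move=> z /=; rewrite in_itv /= => /andP[xz zy]; apply: NA; split.
    by rewrite /= in_itv /= (le_lt_trans x0 xz) (lt_le_trans zy yL).
  by move=> Dz; apply: Hn; exists z.
have : (lebesgue_measure (`]x, y[ : set R) <= lebesgue_measure A)%E.
  by rewrite le_measure // inE //; exact: measurable_itv.
rewrite A0 lebesgue_measure_itv /= lte_fin xy -EFinD lee_fin subr_le0.
by rewrite leNgt xy.
Qed.

Lemma negligible_open_cover {R : realType} (N : set R) (eps : R) :
  (@lebesgue_measure R).-negligible N -> 0 < eps ->
  exists U : set R, [/\ open U, N `<=` U & (lebesgue_measure U < eps%:E)%E].
Proof.
move=> [A [mA A0 NA]] e0.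
have [|U [oU AU UAe]] := lebesgue_regularity_outer mA _ e0.
  by move: A0 => /= ->; rewrite ltry.
exists U; split => //; first exact: subset_trans AU.
have mU : measurable U by exact: measurable_realfun.open_measurable.
rewrite (@measureDI _ _ _ (@lebesgue_measure R) U A mU mA).
apply: le_lt_trans UAe; rewrite -[leRHS]adde0 leeD2l //.
by rewrite -A0 le_measure ?inE //; exact: measurableI.
Qed.

Section measure_upto.
Context {R : realType} (U : set R) (del : R).
Hypothesis oU : open U.
Hypothesis muU : (lebesgue_measure U < del%:E)%E.

Let mU : measurable U := measurable_realfun.open_measurable oU.

Definition measure_upto (t : R) : R :=
  fine (lebesgue_measure (U `&` `]-oo, t])).

Let measure_itv_le (i : interval R) :
  (lebesgue_measure (U `&` [set` i]) <= lebesgue_measure U)%E.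
Proof.
by rewrite le_measure ?inE //; apply: measurableI => //; exact: measurable_itv.
Qed.

Let measure_itv_fin (i : interval R) :
  lebesgue_measure (U `&` [set` i]) \is a fin_num.
Proof.
rewrite ge0_fin_numE ?measure_ge0 //.
exact: le_lt_trans (measure_itv_le i) (lt_le_trans muU (leey _)).
Qed.

Lemma measure_upto_ge0 t : 0 <= measure_upto t.
Proof. by rewrite /measure_upto fine_ge0 // measure_ge0. Qed.

Lemma measure_upto_le t : measure_upto t <= del.
Proof.
rewrite /measure_upto -lee_fin fineK //.
exact/ltW/(le_lt_trans (measure_itv_le _) muU).
Qed.

Lemma measure_upto_split s t : s <= t ->
  measure_upto t = measure_upto s + fine (lebesgue_measure (U `&` `]s, t])).
Proof.
move=> st.
have E : U `&` `]-oo, t] = (U `&` `]-oo, s]) `|` (U `&` `]s, t]).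
  rewrite -setIUr; congr (U `&` _).
  apply/seteqP; split => x /=; rewrite !in_itv /=.
    by move=> xt; case: (leP x s) => xs; [left|right; rewrite xt].
  by case=> [xs|/andP[_ ->]] //; exact: le_trans xs st.
rewrite /measure_upto E measureU //.
- by rewrite fineD //; [exact: (measure_itv_fin `]-oo, s]) |
                        exact: (measure_itv_fin `]s, t])].
- by apply: measurableI => //; exact: measurable_itv.
- by apply: measurableI => //; exact: measurable_itv.
- apply/seteqP; split => x //= [[_ +] [_]]; rewrite !in_itv /=.
  by move=> xs /andP[sx _]; move: (lt_le_trans sx xs); rewrite ltxx.
Qed.

Lemma measure_upto_le_mono s t : s <= t -> measure_upto s <= measure_upto t.
Proof.
by move=> st; rewrite (measure_upto_split st) lerDl fine_ge0 // measure_ge0.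
Qed.

Lemma measure_upto_itv s t : s <= t -> `]s, t] `<=` U ->
  measure_upto t = measure_upto s + (t - s).
Proof.
move=> st sU; rewrite (measure_upto_split st) setIidr // lebesgue_measure_itv /=.
case: ltP => [_|ts]; first by rewrite -EFinD.
have -> : t = s by apply/eqP; rewrite eq_le st andbT -lee_fin.
by rewrite subrr.
Qed.

End measure_upto.

(* Real induction over the supremum of [[set t | g t <= g a]]: [g] cannot jump
   up from the left on [D], it does not increase just to the right of a point
   of [D], nor across an interval lying inside [U]. *)
Lemma sup_induction {R : realType} (D U : set R) (g : R -> R) (a b : R) :
  open U -> a < b -> D a -> D b ->
  (forall x y, a <= x -> x < y -> y <= b -> exists z, [/\ D z, x < z & z < y]) ->
  (forall c, a <= c -> c <= b -> ~ D c -> U c) ->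
  (forall s t, D s -> D t -> s <= t -> g t <= g s + (t - s)) ->
  (forall c, D c -> exists2 r : R, 0 < r &
     forall t, D t -> c < t -> t < c + r -> g t <= g c) ->
  (forall s t, D s -> D t -> s < t -> `]s, t] `<=` U -> g t <= g s) ->
  g b <= g a.
Proof.
move=> oU ab Da Db dense cover gleft gright gU.
pose S := [set t | [/\ D t, a <= t, t <= b & g t <= g a]].
have hS : has_sup S by split; [exists a; split => //; exact: ltW | exists b => t []].
set c := sup S.
have ubS := sup_upper_bound hS.
have ac : a <= c by apply: ubS; split => //; exact: ltW.
have cb : c <= b by apply: ge_sup; [exists a; split => //; exact: ltW | move=> t []].
have notS t : S t -> c < t -> False by move=> /ubS; rewrite leNgt => /negP.
have near_right r : 0 < r -> c < b ->
    exists t, [/\ D t, c < t, t < c + r & t <= b].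
  move=> r0 cb'.
  have cm : c < Order.min (c + r) b by rewrite lt_min cb' ltrDl r0.
  have mb : Order.min (c + r) b <= b by rewrite ge_min lexx orbT.
  have [t [Dt ct]] := dense c _ ac cm mb.
  by rewrite lt_min => /andP[tcr tb]; exists t; split => //; exact: ltW.
have inS t : D t -> c < t -> t <= b -> g t <= g a -> S t.
  by move=> Dt ct tb gt; split => //; exact: le_trans ac (ltW ct).
have [Dc|nDc] := pselect (D c).
  have gc : g c <= g a.
    apply/ler_addgt0Pr => eta eta0.
    have [s Ss cs] := sup_adherent eta0 hS; rewrite -/c in cs.
    have [Ds _ _ gs] := Ss.
    by have := gleft s c Ds Dc (ubS s Ss); lra.
  have [cbE|cbN] := eqVneq c b; first by rewrite -cbE.
  have [r r0 Hr] := gright c Dc.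
  have cb' : c < b by rewrite lt_neqAle cbN cb.
  have [t [Dt ct tcr tb]] := near_right r r0 cb'.
  exfalso; apply: (notS t _ ct); apply: inS => //.
  exact: le_trans (Hr t Dt ct tcr) gc.
exfalso.
have /(_ _)/nbhs_ballP[|r r0 Hr] := oU c; first exact: cover.
have [s Ss cs] := sup_adherent r0 hS; rewrite -/c in cs.
have [Ds _ _ gs] := Ss.
have sc : s < c.
  rewrite lt_neqAle (ubS s Ss) andbT.
  by apply/eqP => scE; apply: nDc; rewrite -scE.
have cb' : c < b by rewrite lt_neqAle cb andbT; apply/eqP => cbE; apply: nDc; rewrite cbE.
have [t [Dt ct tcr tb]] := near_right r r0 cb'.
have sU : `]s, t] `<=` U.
  move=> x /=; rewrite in_itv /= => /andP[sx xt]; apply: Hr.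
  by rewrite /ball /= /ball_ /= ltr_norml; apply/andP; split; lra.
apply: (notS t _ ct); apply: inS => //.
exact: le_trans (gU s t Ds Dt (lt_trans sc ct) sU) gs.
Qed.

Section slope_bound.
Context {R : realType} (L : R) (D : set R) (f : R -> R).
Hypothesis DL : D `<=` `]0, L[.
Hypothesis negl : (@lebesgue_measure R).-negligible (`]0, L[ `\` D).
Hypothesis fmono : forall s t, D s -> D t -> s < t -> f t <= f s.
Hypothesis fslope : forall t0 e : R, D t0 -> 0 < e -> e < 1 ->
  exists2 r : R, 0 < r &
    forall t, D t -> t0 < t -> t < t0 + r -> f t - f t0 <= - (1 - e) * (t - t0).

(* The excess of [f + (1 - e) id] is absorbed by the measure of an open cover
   [U] of the gaps of [D]: [g] below is nonincreasing by [sup_induction]. *)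
Lemma slope_bound_up_to a b e del : D a -> D b -> a < b ->
  0 < e -> e < 1 -> 0 < del -> f b + b <= f a + a + e * (b - a) + del.
Proof.
move=> Da Db ab e0 e1 del0.
have [U [oU NU muU]] := negligible_open_cover negl del0.
have m0 := measure_upto_ge0 U.
have mle := measure_upto_le oU muU.
have mmono := measure_upto_le_mono oU muU.
pose g t := f t + (1 - e) * t - measure_upto U t.
suff : g b <= g a by rewrite /g; have := m0 a; have := mle b; lra.
have [a0 aL] : 0 < a /\ a < L by move: (DL Da); rewrite /= in_itv /= => /andP.
have [b0 bL] : 0 < b /\ b < L by move: (DL Db); rewrite /= in_itv /= => /andP.
apply: (sup_induction oU ab Da Db).
- move=> x y ax xy yb; apply: (negligible_compl_dense negl) => //.
    exact: le_trans (ltW a0) ax.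
  exact: le_trans yb (ltW bL).
- move=> c ac cb nDc; apply: NU; split => //=.
  by rewrite in_itv /= (lt_le_trans a0 ac) (le_lt_trans cb bL).
- move=> s t Ds Dt; rewrite le_eqVlt => /predU1P[->|st]; first lra.
  by have := fmono Ds Dt st; have := mmono s t (ltW st); rewrite /g; nra.
- move=> c Dc; have [r r0 Hr] := fslope Dc e0 e1.
  exists r => // t Dt ct tcr.
  by have := Hr t Dt ct tcr; have := mmono c t (ltW ct); rewrite /g; nra.
- move=> s t Ds Dt st sU.
  have mt := measure_upto_itv oU muU (ltW st) sU.
  by have := fmono Ds Dt st; rewrite /g mt; nra.
Qed.

Lemma add_id_nonincreasing s t : D s -> D t -> s < t -> f t + t <= f s + s.
Proof.
move=> Ds Dt st; apply/ler_addgt0Pr => eta eta0.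
have c0 : 0 < 2 * (t - s + eta) by lra.
set e := eta / (2 * (t - s + eta)).
have eE : e * (2 * (t - s + eta)) = eta by rewrite /e divfK // gt_eqF.
have e0 : 0 < e by rewrite divr_gt0.
have e1 : e < 1 by nra.
have eta2 : 0 < eta / 2 by lra.
by have := slope_bound_up_to Ds Dt st e0 e1 eta2; nra.
Qed.

End slope_bound.

Lemma cotR_tan {R : realType} (t : R) : cotR t = tan (pi / 2 - t).
Proof.
by rewrite /cotR /tan (addrC (pi / 2)) sinDpihalf cosDpihalf cosN sinN opprK.
Qed.

Theorem mainTheorem12 (R : realType) (k0 L : R) (D : set R) (w : R -> R)
  (hk0 : k0 < 0) (hL0 : 0 < L) (hLpi : L <= pi)
  (hDsub : D `<=` `]0, L[)
  (hDfull : (@lebesgue_measure R).-negligible (`]0, L[ `\` D))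
  (hdecr : forall t1 t2, D t1 -> D t2 -> t1 < t2 -> w t2 < w t1)
  (hdini : forall t0, D t0 ->
     (right_upper_dini D w t0 <= (- 1 - w t0 ^+ 2)%:E)%E)
  (hnear0 : exists2 delta : R, 0 < delta &
     forall t, D t -> t < delta ->
       w t <= Num.sqrt (- k0) * coshR (Num.sqrt (- k0) * t)
                / sinhR (Num.sqrt (- k0) * t)) :
  forall t, D t -> w t <= cotR t.
Proof.
move=> t Dt.
have nonincr s : D s -> s < t -> atan (w t) + t <= atan (w s) + s.
  move=> Ds st; apply: (add_id_nonincreasing (f := atan \o w) hDsub hDfull _ _ Ds Dt st).
    by move=> s' t' Ds' Dt' st'; exact/le_atan/ltW/hdecr.
  by move=> t0 e Dt0; exact: atan_right_slope (hdini t0 Dt0).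
have [t0 tL] : 0 < t /\ t < L by move: (hDsub t Dt); rewrite /= in_itv /= => /andP.
have atan_le : atan (w t) <= pi / 2 - t.
  rewrite lerBrDr; apply/ler_addgt0Pr => eta eta0.
  have m0 : 0 < Order.min t eta by rewrite lt_min t0 eta0.
  have mL : Order.min t eta <= L by rewrite ge_min (ltW tL).
  have [s [Ds _]] := negligible_compl_dense hDfull (lexx 0) m0 mL.
  rewrite lt_min => /andP[st se].
  by have := nonincr s Ds st; have := atan_ltpi2 (w s); lra.
have tI : pi / 2 - t \in `](- (pi / 2)), (pi / 2)[.
  by rewrite in_itv /=; apply/andP; split; lra.
rewrite cotR_tan leNgt; apply/negP => /lt_atan; rewrite tanK //; lra.
Qed.
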